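(* Let $F_2$ be the free group on $a,b$ and $T=[a,b]=aba^{-1}b^{-1}$. For every positive integer $n$, $$(ab)^n=\prod_{i=1}^{n-1}\left(\prod_{j=0}^{i-1}[a^ib^{i-1-j},T^{-1}]\,T^{-1}\right)\cdot a^nb^n$$ in $F_2$, where the products are ordered from left to right with increasing $i$ and, for fixed $i$, increasing $j$.
   Context: Commutator convention: $[x,y]=xyx^{-1}y^{-1}$. An empty product equals $1$. *)

From HB Require Import structures.
From mathcomp Require Import all_boot.
Set Implicit Arguments. Unset Strict Implicit. Unset Printing Implicit Defensive.
Local Open Scope group_scope.

(* The paper's commutator convention: [x,y] = x y x^-1 y^-1
   (NOT mathcomp's commg, which is x^-1 y^-1 x y). *)
Definition pcomm (G : groupType) (x y : G) : G := x * y * x^-1 * y^-1.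

From mathcomp Require Import all_boot.
Local Open Scope group_scope.

(* Both sides are built from the elements c_x(k) := x b^k a b^-k.  The factor
   [x b^k, T^-1] T^-1 = (x b^k) T^-1 (x b^k)^-1 equals c_x(k+1) c_x(k)^-1, so
   the inner product over j telescopes to c_x(i) c_x(0)^-1; for x = a^i this is
   a^i b^i a b^-i a^-(i+1), which is exactly the correction turning
   a^i b^i . a b into a^(i+1) b^(i+1), whence the identity by induction on n.
   The correction for i = 0 is trivial, so the outer product may start at 0. *)

Section Pcomm.

Variable G : groupType.
Implicit Types x y : G.

Lemma invg_pcomm x y : (pcomm x y)^-1 = pcomm y x.
Proof. by rewrite /pcomm !invgM !invgK !mulgA. Qed.

Lemma pcommMg x y : pcomm x y * y = x * y * x^-1.
Proof. by rewrite /pcomm mulgVK. Qed.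

End Pcomm.

Section ProductFormula.

Variables (G : groupType) (a b : G).
Implicit Type x : G.

Lemma pcomm_invT_step x k :
  let T := pcomm a b in
  pcomm (x * b ^+ k) T^-1 * T^-1 =
  (x * b ^+ k.+1 * a * (b ^+ k.+1)^-1) * (x * b ^+ k * a * (b ^+ k)^-1)^-1.
Proof.
rewrite /= pcommMg invg_pcomm /pcomm expgSr !invgM !invgK.
by rewrite !mulgA !mulgVK.
Qed.

Lemma prod_pcomm_invT x i :
  let T := pcomm a b in
  \prod_(0 <= j < i) (pcomm (x * b ^+ (i - 1 - j)) T^-1 * T^-1) =
  x * b ^+ i * a * (b ^+ i)^-1 * (x * a)^-1.
Proof.
pose c k := x * b ^+ k * a * (b ^+ k)^-1.
have c0 : c 0%N = x * a by rewrite /c expg0 invg1 !mulg1.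
rewrite /= -c0 -/(c i).
under eq_big_nat => j /andP[_ lt_ji].
  rewrite pcomm_invT_step subnAC subn1 prednK ?subn_gt0 // -subnS.
over.
rewrite (telescope_big (fun j k => c (i - j) * (c (i - k))^-1)) => [|k _ /=].
  by case: i => [|i]; rewrite ?mulgV // subn0 subnn.
by rewrite mulgA mulgVK.
Qed.

Lemma expg_mul_prod n :
  (a * b) ^+ n =
  \prod_(0 <= i < n) (a ^+ i * b ^+ i * a * (b ^+ i)^-1 * (a ^+ i * a)^-1)
  * (a ^+ n * b ^+ n).
Proof.
elim: n => [|n IHn]; first by rewrite big_geq // !expg0 !mulg1.
rewrite expgSr IHn big_nat_recr //= !expgSr.
by rewrite invgM !mulgA !mulgVK.
Qed.

End ProductFormula.

Theorem lemma2p13 (G : groupType) (a b : G) (n : nat) : (0 < n)%N ->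
  let T := pcomm a b in
  (a * b) ^+ n =
  (\prod_(1 <= i < n) \prod_(0 <= j < i) (pcomm (a ^+ i * b ^+ (i - 1 - j)) T^-1 * T^-1))
  * (a ^+ n * b ^+ n).
Proof.
move=> n_gt0 T; rewrite {}/T expg_mul_prod big_ltn //.
rewrite !expg0 invg1 !mul1g mulg1 mulgV mul1g.
by under [in RHS]eq_big_nat => i _ do rewrite prod_pcomm_invT.
Qed.
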